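(* Let $k$ be an even positive integer. Then each connected component of $\mathcal F_k$ is a tree in which every vertex has infinitely many neighbors.
   Context: The vertex set $V$ consists of all reduced fractions $p/q$ with $p,q\in\mathbb Z$, $\gcd(p,q)=1$, together with $1/0$; here $p/q$ and $(-p)/(-q)$ denote the same vertex. For vertices define $d(p/q,a/b)=|pb-qa|$. The graph $\mathcal F_k$ has vertex set $V$, with an edge between $p/q$ and $a/b$ exactly when $d(p/q,a/b)=k$. *)

From Stdlib Require Import ZArith List Relations.
Import ListNotations.
Open Scope Z_scope.

(** Vertices: reduced fractions p/q (gcd p q = 1), including 1/0, with
    p/q and (-p)/(-q) identified.  We pick the canonical representative
    with q > 0, or (p,q) = (1,0). *)
Definition canon (v : Z * Z) : Prop :=
  Z.gcd (fst v) (snd v) = 1 /\ (0 < snd v \/ (snd v = 0 /\ fst v = 1)).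

Definition Vtx : Type := { v : Z * Z | canon v }.

Definition dist (x y : Vtx) : Z :=
  let (p, q) := proj1_sig x in
  let (a, b) := proj1_sig y in
  Z.abs (p * b - q * a).

Definition Fadj (k : Z) (x y : Vtx) : Prop := dist x y = k.

Section Graph.
Variable V : Type.
Variable adj : V -> V -> Prop.

Definition component (v : V) (w : V) : Prop := clos_refl_trans V adj v w.

Fixpoint chain (l : list V) : Prop :=
  match l with
  | x :: ((y :: _) as t) => adj x y /\ chain t
  | _ => True
  end.

Definition is_cycle (l : list V) : Prop :=
  (3 <= length l)%nat /\ NoDup l /\ chain l /\
  match l with
  | x :: _ => adj (last l x) x
  | [] => False
  end.

Definition connected_in (S : V -> Prop) : Prop :=
  forall x y, S x -> S y ->
    clos_refl_trans V (fun a b => S a /\ S b /\ adj a b) x y.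

Definition acyclic_in (S : V -> Prop) : Prop :=
  forall l, is_cycle l -> ~ (forall x, In x l -> S x).

Definition is_tree_in (S : V -> Prop) : Prop :=
  (exists x, S x) /\ connected_in S /\ acyclic_in S.

Definition infinite_degree (v : V) : Prop :=
  ~ exists l : list V, forall w, adj v w -> In w l.
End Graph.

From Stdlib Require Import ZArith List Relations Lia Permutation ProofIrrelevance.
Import ListNotations.
Open Scope Z_scope.

(** Identify a vertex p/q with the primitive vector (p, q) and let N(p/q) = p^2 + q^2.
    For k even, a vertex v has at most one F_k-neighbour w with N(w) <= N(v):
    two such neighbours, oriented so that det(v, w) = k, differ by t v; Lagrange's
    identity N(v) N(w) = (v.w)^2 + k^2 gives |v.w| < N(v), hence |t| <= 1; and
    t = +-1 is impossible because det(v, w) even forces w = v mod 2, so w +- v would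
    not be primitive.  A vertex of maximal norm on a cycle has two distinct
    neighbours on it, so F_k has no cycles.  For the degree: if r p + s q = 1, the
    vectors x (p, q) + k (-s, r) are neighbours of p/q for every x = 1 mod k, and
    their dot products with (r, s) are unbounded. *)

Lemma gcd_1_odd a b : Z.gcd a b = 1 -> Z.odd a = true \/ Z.odd b = true.
Proof.
  intros Hg.
  destruct (Z.Even_or_Odd a) as [[m ->]|Ha]; [|left; now apply Z.odd_spec].
  destruct (Z.Even_or_Odd b) as [[n ->]|Hb]; [|right; now apply Z.odd_spec].
  rewrite Z.gcd_mul_mono_l_nonneg in Hg by lia. lia.
Qed.

Lemma odd_shift_not_coprime_of_even_det p q c d t :
  Z.gcd p q = 1 -> Z.gcd c d = 1 -> Z.Even (p*d - q*c) -> Z.odd t = true ->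
  Z.gcd (c + t*p) (d + t*q) <> 1.
Proof.
  intros Hv Hw [m Hm] Ht Hs.
  apply gcd_1_odd in Hv, Hw, Hs.
  assert (Hdet : Z.odd (p*d - q*c) = false) by (rewrite Hm, Z.odd_mul; reflexivity).
  rewrite Z.odd_sub, !Z.odd_mul in Hdet. rewrite !Z.odd_add, !Z.odd_mul, Ht in Hs.
  destruct (Z.odd p), (Z.odd q), (Z.odd c), (Z.odd d); simpl in *; intuition congruence.
Qed.

Lemma det_eq_shift p q a b c d :
  Z.gcd p q = 1 -> p*b - q*a = p*d - q*c -> exists t, a = c + t*p /\ b = d + t*q.
Proof.
  intros Hg E.
  assert (Hpq : p*(b - d) = q*(a - c)) by lia.
  assert (Dp : (p | a - c)) by (apply Z.gauss with q; [exists (b - d); lia | exact Hg]).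
  assert (Dq : (q | b - d)) by (apply Z.gauss with p; [exists (a - c); lia | now rewrite Z.gcd_comm]).
  destruct Dp as [s Hs], Dq as [t Ht].
  destruct (Z.eq_dec q 0) as [->|Hq]; [exists s; lia|].
  exists t. split; [|lia].
  assert (Hqt : q*(p*t - s*p) = 0) by nia.
  apply Z.mul_eq_0 in Hqt. lia.
Qed.

Lemma lagrange_identity p q a b :
  (p*p + q*q)*(a*a + b*b) = (p*a + q*b)*(p*a + q*b) + (p*b - q*a)*(p*b - q*a).
Proof. ring. Qed.

Lemma dot_lt_sqnorm p q a b k : k <> 0 -> 0 < p*p + q*q ->
  p*b - q*a = k -> a*a + b*b <= p*p + q*q ->
  - (p*p + q*q) < p*a + q*b < p*p + q*q.
Proof.
  intros Hk HN Hdet Hab.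
  pose proof (lagrange_identity p q a b) as L. rewrite Hdet in L.
  set (N := p*p + q*q) in *. set (z := p*a + q*b) in *.
  assert (N*(a*a + b*b) <= N*N) by (apply Z.mul_le_mono_nonneg_l; lia).
  assert (0 < k*k) by nia.
  assert (z*z < N*N) by lia.
  nia.
Qed.

Lemma det_neighbour_unique p q a b c d k :
  k <> 0 -> Z.Even k -> Z.gcd p q = 1 -> Z.gcd a b = 1 -> Z.gcd c d = 1 ->
  p*b - q*a = k -> p*d - q*c = k ->
  a*a + b*b <= p*p + q*q -> c*c + d*d <= p*p + q*q -> a = c /\ b = d.
Proof.
  intros Hk Hev Hv Hab Hcd Eab Ecd Nab Ncd.
  assert (HN : 0 < p*p + q*q).
  { destruct (Z.eq_dec p 0) as [->|]; [|nia]. destruct (Z.eq_dec q 0) as [->|]; [discriminate|nia]. }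
  pose proof (dot_lt_sqnorm p q a b k Hk HN Eab Nab) as Dab.
  pose proof (dot_lt_sqnorm p q c d k Hk HN Ecd Ncd) as Dcd.
  destruct (det_eq_shift p q a b c d Hv ltac:(lia)) as [t [-> ->]].
  assert (Ht : t = 0 \/ t = 1 \/ t = -1) by nia.
  destruct Ht as [->|Ht]; [lia|].
  exfalso. apply (odd_shift_not_coprime_of_even_det p q c d t Hv Hcd); auto.
  - now rewrite Ecd.
  - now destruct Ht as [->| ->].
Qed.

Lemma last_cons_default {A : Type} (l : list A) a d d' : last (a :: l) d = last (a :: l) d'.
Proof. revert a. induction l as [|b l IH]; intros a; [reflexivity|]. apply IH. Qed.

Lemma last_In {A : Type} (l : list A) d : l <> [] -> In (last l d) l.
Proof.
  induction l as [|a l IH]; intros H; [congruence|].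
  destruct l as [|b l]; [now left|]. right. apply IH. discriminate.
Qed.

Lemma list_max_exists {A : Type} (f : A -> Z) l :
  l <> [] -> exists m, In m l /\ forall x, In x l -> f x <= f m.
Proof.
  induction l as [|a l IH]; intros H; [congruence|].
  destruct l as [|b l].
  - exists a. split; [now left|]. intros x [->|[]]. lia.
  - destruct IH as [m [Hm Hmax]]; [discriminate|].
    destruct (Z_le_dec (f a) (f m)).
    + exists m. split; [now right|]. intros x [->|Hx]; auto.
    + exists a. split; [now left|]. intros x [->|Hx]; [lia|]. specialize (Hmax x Hx). lia.
Qed.

Section Cycles.
Variable V : Type.
Variable adj : V -> V -> Prop.

Lemma chain_snoc x l y :
  chain V adj (x :: l) -> adj (last (x :: l) x) y -> chain V adj ((x :: l) ++ [y]).
Proof.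
  revert x. induction l as [|z l IH]; intros x Hc Ha; [now split|].
  destruct Hc as [Hxz Hc]. split; [exact Hxz|].
  apply (IH z Hc). now rewrite (last_cons_default l z z x).
Qed.

Lemma is_cycle_rotate1 x l : is_cycle V adj (x :: l) -> is_cycle V adj (l ++ [x]).
Proof.
  intros [Hlen [Hnd [Hc Hclose]]].
  destruct l as [|y l]; [simpl in Hlen; lia|].
  destruct Hc as [Hxy Hc].
  repeat split.
  - rewrite length_app. simpl in *. lia.
  - eapply Permutation_NoDup; [apply Permutation_cons_append | exact Hnd].
  - apply chain_snoc; [exact Hc|]. now rewrite (last_cons_default l y y x).
  - change (adj (last ((y :: l) ++ [x]) y) y). now rewrite last_last.
Qed.

Lemma is_cycle_rotate l1 l2 : is_cycle V adj (l1 ++ l2) -> is_cycle V adj (l2 ++ l1).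
Proof.
  revert l2. induction l1 as [|a l1 IH]; intros l2 H.
  - now rewrite app_nil_r.
  - apply is_cycle_rotate1 in H. rewrite <- app_assoc in H.
    apply IH in H. now rewrite <- app_assoc in H.
Qed.

Lemma clos_refl_trans_sym (R : V -> V -> Prop) :
  (forall x y, R x y -> R y x) -> forall x y, clos_refl_trans V R x y -> clos_refl_trans V R y x.
Proof.
  intros HR x y H. induction H; eauto using clos_refl_trans.
Qed.

Hypothesis adj_sym : forall x y, adj x y -> adj y x.

Lemma is_cycle_head_neighbours m r : is_cycle V adj (m :: r) ->
  exists y z, y <> z /\ In y r /\ In z r /\ adj m y /\ adj m z.
Proof.
  intros [Hlen [Hnd [Hc Hclose]]].
  destruct r as [|y r]; [simpl in Hlen; lia|].
  assert (Hr : r <> []) by (intros ->; simpl in Hlen; lia).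
  exists y, (last r y).
  apply NoDup_cons_iff in Hnd as [_ Hnd]. apply NoDup_cons_iff in Hnd as [Hy _].
  repeat split.
  - intros E. apply Hy. rewrite E. now apply last_In.
  - now left.
  - right. now apply last_In.
  - exact (proj1 Hc).
  - apply adj_sym. change (adj (last (y :: r) m) m) in Hclose.
    destruct r as [|z r]; [congruence|]. now rewrite (last_cons_default r z y m).
Qed.

Lemma is_cycle_neighbours l m : is_cycle V adj l -> In m l ->
  exists y z, y <> z /\ In y l /\ In z l /\ adj m y /\ adj m z.
Proof.
  intros Hcy Hm.
  destruct (in_split m l Hm) as [l1 [l2 ->]].
  apply (is_cycle_rotate l1 (m :: l2)) in Hcy.
  destruct (is_cycle_head_neighbours m (l2 ++ l1) Hcy) as [y [z [Hyz [Hy [Hz Hadj]]]]].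
  exists y, z. rewrite !in_app_iff in *. simpl. tauto.
Qed.

Lemma acyclic_of_unique_lower_neighbour (f : V -> Z) :
  (forall v w1 w2, adj v w1 -> adj v w2 -> f w1 <= f v -> f w2 <= f v -> w1 = w2) ->
  forall l, ~ is_cycle V adj l.
Proof.
  intros Hlow l Hcy.
  destruct (list_max_exists f l) as [m [Hm Hmax]].
  { intros ->. destruct Hcy as [Hlen _]. simpl in Hlen. lia. }
  destruct (is_cycle_neighbours l m Hcy Hm) as [y [z [Hyz [Hy [Hz [Hmy Hmz]]]]]].
  apply Hyz, (Hlow m); auto.
Qed.

Lemma component_connected v : connected_in V adj (component V adj v).
Proof.
  set (R := fun a b => component V adj v a /\ component V adj v b /\ adj a b).
  assert (Hv : forall x, component V adj v x -> clos_refl_trans V R v x).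
  { intros x Hx. apply clos_rt_rtn1_iff in Hx.
    induction Hx as [|y x Hyx Hvy IH]; [apply rt_refl|].
    apply clos_rt_rtn1_iff in Hvy.
    apply rt_trans with y; [exact IH|].
    apply rt_step. repeat split; [exact Hvy | | exact Hyx].
    apply rt_trans with y; [exact Hvy | now apply rt_step]. }
  intros x y Hx Hy. apply rt_trans with v; [|now apply Hv].
  apply clos_refl_trans_sym; [|now apply Hv].
  intros a b (Ha & Hb & Hab). repeat split; auto.
Qed.

End Cycles.

Definition sqnorm (x : Vtx) : Z := let (p, q) := proj1_sig x in p*p + q*q.

Lemma Fadj_sym k x y : Fadj k x y -> Fadj k y x.
Proof. destruct x as [[p q] Hx], y as [[a b] Hy]. unfold Fadj, dist; simpl. lia. Qed.

Lemma abs_det_orient p q a b k : Z.abs (p*b - q*a) = k ->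
  exists s, (s = 1 \/ s = -1) /\ p*(s*b) - q*(s*a) = k.
Proof.
  intros H. destruct (Z_le_dec 0 (p*b - q*a)); [exists 1 | exists (-1)]; split; lia.
Qed.

Lemma Fadj_lower_neighbour_unique k : k <> 0 -> Z.Even k ->
  forall v w1 w2 : Vtx, Fadj k v w1 -> Fadj k v w2 ->
  sqnorm w1 <= sqnorm v -> sqnorm w2 <= sqnorm v -> w1 = w2.
Proof.
  intros Hk Hev [[p q] [Hv Cv]] [[a b] [Hab Cab]] [[c d] [Hcd Ccd]] A1 A2 N1 N2.
  unfold Fadj, dist, sqnorm in *; simpl in *.
  apply subset_eq_compat.
  destruct (abs_det_orient p q a b k A1) as [s [Hs E1]].
  destruct (abs_det_orient p q c d k A2) as [r [Hr E2]].
  assert (Hsab : Z.gcd (s*a) (s*b) = 1)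
    by (rewrite Z.gcd_mul_mono_l, Hab; destruct Hs as [->| ->]; reflexivity).
  assert (Hrcd : Z.gcd (r*c) (r*d) = 1)
    by (rewrite Z.gcd_mul_mono_l, Hcd; destruct Hr as [->| ->]; reflexivity).
  destruct (det_neighbour_unique p q (s*a) (s*b) (r*c) (r*d) k Hk Hev Hv Hsab Hrcd E1 E2)
    as [Ea Eb]; [destruct Hs as [->| ->]; lia | destruct Hr as [->| ->]; lia |].
  f_equal; destruct Hs as [->| ->], Hr as [->| ->]; lia.
Qed.

Lemma det_solution_with_dot p q u v k B :
  u*p + v*q = 1 -> exists a b,
    Z.gcd a b = 1 /\ p*b - q*a = k /\ u*a + v*b = 1 + B*k.
Proof.
  intros Huv.
  set (x := 1 + B*k). set (a := p*x - v*k). set (b := q*x + u*k).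
  assert (Hdet : p*b - q*a = k)
    by (transitivity (k*(u*p + v*q)); [unfold a, b; ring | rewrite Huv; ring]).
  assert (Hdot : u*a + v*b = x)
    by (transitivity (x*(u*p + v*q)); [unfold a, b; ring | rewrite Huv; ring]).
  exists a, b. repeat split; [|exact Hdet|exact Hdot].
  apply Z.bezout_1_gcd. exists (u + B*q), (v - B*p).
  transitivity ((u*a + v*b) - B*(p*b - q*a)); [ring|].
  rewrite Hdot, Hdet. unfold x. ring.
Qed.

Lemma vertex_of_coprime a b : Z.gcd a b = 1 ->
  exists w : Vtx, proj1_sig w = (a, b) \/ proj1_sig w = (-a, -b).
Proof.
  intros H.
  destruct (Z_lt_le_dec 0 b) as [Hb|Hb]; [|destruct (Z.eq_dec b 0) as [->|Hb0]].
  - now exists (exist _ (a, b) (conj H (or_introl Hb))); left.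
  - rewrite Z.gcd_0_r in H.
    assert (C : canon (1, 0)) by (split; simpl; auto).
    exists (exist _ (1, 0) C). simpl.
    assert (Ha : a = 1 \/ a = -1) by lia. destruct Ha as [->| ->]; [left|right]; reflexivity.
  - assert (C : canon (-a, -b))
      by (split; simpl; [now rewrite Z.gcd_opp_l, Z.gcd_opp_r | lia]).
    now exists (exist _ (-a, -b) C); right.
Qed.

Lemma Fadj_infinite_degree k : 0 < k -> forall w : Vtx, infinite_degree Vtx (Fadj k) w.
Proof.
  intros Hk [[p q] [Hg Hc]] [l Hl].
  destruct (Z.gcd_bezout p q 1 Hg) as [u [v Huv]].
  set (f := fun y : Vtx => let (a, b) := proj1_sig y in Z.abs (u*a + v*b)).
  set (w := exist canon (p, q) (conj Hg Hc)) in Hl.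
  destruct (list_max_exists f (w :: l)) as [m [_ Hmax]]; [discriminate|].
  destruct (det_solution_with_dot p q u v k (f m) Huv) as [a [b [Hab [Hdet Hdot]]]].
  destruct (vertex_of_coprime a b Hab) as [[[a' b'] C'] Hw']. simpl in Hw'.
  assert (Hfm : 0 <= f m) by (unfold f; destruct (proj1_sig m); lia).
  assert (Hadj : Fadj k w (exist _ (a', b') C')).
  { unfold Fadj, dist; simpl. destruct Hw' as [E|E]; injection E as -> ->; lia. }
  specialize (Hmax _ (or_intror (Hl _ Hadj))). unfold f at 1 in Hmax; simpl in Hmax.
  assert (f m * 1 <= f m * k) by (apply Z.mul_le_mono_nonneg_l; lia).
  destruct Hw' as [E|E]; injection E as -> ->; lia.
Qed.

Theorem proposition4p13 (k : Z) (hk : 0 < k) (heven : Z.Even k) :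
  forall v : Vtx,
    is_tree_in Vtx (Fadj k) (component Vtx (Fadj k) v) /\
    (forall w : Vtx, component Vtx (Fadj k) v w -> infinite_degree Vtx (Fadj k) w).
Proof.
  intros v. split; [repeat split|].
  - exists v. apply rt_refl.
  - apply component_connected, Fadj_sym.
  - intros l Hcy _. revert Hcy.
    apply (acyclic_of_unique_lower_neighbour Vtx (Fadj k) (Fadj_sym k) sqnorm).
    apply Fadj_lower_neighbour_unique; [lia | exact heven].
  - intros w _. now apply Fadj_infinite_degree.
Qed.
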